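(* Let $R$ be a commutative ring with nonzero identity, $\delta$ an expansion of ideals of $R$, and $I$ a proper ideal of $R$ with $\delta(\delta(I))=\delta(I)$ (for instance $\delta=\delta_1$, $\delta_1(J)=\sqrt{J}$). Then: (1) If $I$ is a $\delta$-$n$-ideal and $a\notin\sqrt{0}$, then $\delta((I:a))=\delta(I)$. (2) $\delta(I)$ is an $n$-ideal if and only if $\delta(I)$ is a $\delta$-$n$-ideal. (3) If $J$ is an ideal of $R$ and $K$ an ideal of $R$ with $IK=JK$, where $I,J$ are $\delta$-$n$-ideals of $R$, $\delta(\delta(J))=\delta(J)$ and $K\cap(R\setminus\sqrt{0})\neq\emptyset$, then $\delta(I)=\delta(J)$. (4) If $K$ is an ideal of $R$ such that $IK$ and $I$ are $\delta$-$n$-ideals of $R$, $\delta(\delta(IK))=\delta(IK)$ and $K\cap(R\setminus\sqrt{0})\neq\emptyset$, then $\delta(IK)=\delta(I)$.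
   Context: An expansion of ideals of a ring $R$ is a map $\delta$ from the set of ideals of $R$ to itself such that $I\subseteq\delta(I)$ for every ideal $I$, and $\delta(I)\subseteq\delta(J)$ whenever $I\subseteq J$. $\sqrt{0}$ denotes the nilradical of $R$ and $(I:a)=\{r\in R: ra\in I\}$. Given an expansion $\delta$, a proper ideal $I$ of $R$ is a $\delta$-$n$-ideal if whenever $a,b\in R$ with $ab\in I$ and $a\notin\sqrt{0}$, then $b\in\delta(I)$. An $n$-ideal is a proper ideal $I$ such that $ab\in I$ and $a\notin\sqrt{0}$ imply $b\in I$. *)

From mathcomp Require Import all_boot all_algebra.
Set Implicit Arguments. Unset Strict Implicit. Unset Printing Implicit Defensive.
Import GRing.Theory.
Local Open Scope ring_scope.

Definition subsetR (R : Type) (A B : R -> Prop) : Prop := forall x, A x -> B x.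

Definition is_idl (R : comNzRingType) (I : R -> Prop) : Prop :=
  [/\ I 0, (forall x y, I x -> I y -> I (x + y)) & (forall r x, I x -> I (r * x))].

Definition proper_idl (R : comNzRingType) (I : R -> Prop) : Prop :=
  is_idl I /\ ~ I 1.

Definition nilrad (R : comNzRingType) : R -> Prop :=
  fun x => exists n : nat, x ^+ n = 0.

Definition radical (R : comNzRingType) (I : R -> Prop) : R -> Prop :=
  fun x => exists n : nat, I (x ^+ n).

Definition colon (R : comNzRingType) (I : R -> Prop) (a : R) : R -> Prop :=
  fun r => I (r * a).

(* product of ideals IK: the smallest ideal containing all products ab *)
Definition ideal_mul (R : comNzRingType) (I K : R -> Prop) : R -> Prop :=
  fun x => forall L : R -> Prop, is_idl L ->
    (forall a b, I a -> K b -> L (a * b)) -> L x.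

Definition expansion (R : comNzRingType) (delta : (R -> Prop) -> (R -> Prop)) : Prop :=
  [/\ (forall I, is_idl I -> is_idl (delta I)),
      (forall I, is_idl I -> subsetR I (delta I)) &
      (forall I J, is_idl I -> is_idl J -> subsetR I J -> subsetR (delta I) (delta J))].

Definition delta_n_ideal (R : comNzRingType) (delta : (R -> Prop) -> (R -> Prop))
  (I : R -> Prop) : Prop :=
  proper_idl I /\
  (forall a b : R, I (a * b) -> ~ nilrad a -> delta I b).

Definition n_ideal (R : comNzRingType) (I : R -> Prop) : Prop :=
  proper_idl I /\
  (forall a b : R, I (a * b) -> ~ nilrad a -> I b).

(** Every inclusion needed is obtained in the same way: if [J] lies in
    [delta I] and [delta] is idempotent at [I], monotonicity gives
    [delta J <= delta I].  The inclusions [J <= delta I] come from the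
    defining property of a [delta]-n-ideal: whenever [k x] lies in [I] for a
    fixed non-nilpotent [k] (here [k = a] for the colon ideal, or [k] taken
    from [K] when [J K <= I]), [x] lies in [delta I]. *)
From mathcomp Require Import all_boot all_algebra.
From Stdlib Require Import FunctionalExtensionality PropExtensionality.
Set Implicit Arguments. Unset Strict Implicit.
Import GRing.Theory.
Local Open Scope ring_scope.

Lemma subsetR_antisym (T : Type) (A B : T -> Prop) :
  subsetR A B -> subsetR B A -> A = B.
Proof.
move=> AB BA; apply: functional_extensionality => x.
by apply: propositional_extensionality; split; [exact: AB | exact: BA].
Qed.

Section Ideals.

Variable R : comNzRingType.
Implicit Types (I K : R -> Prop) (a b : R).

Lemma ideal_mul_mem I K a b : I a -> K b -> ideal_mul I K (a * b).
Proof. by move=> Ia Kb L _; apply. Qed.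

Lemma ideal_mul_subl I K : is_idl I -> subsetR (ideal_mul I K) I.
Proof.
move=> Iid x; apply=> // a b Ia _.
by case: Iid => _ _ IM; rewrite mulrC; apply: IM.
Qed.

Lemma colon_idl I a : is_idl I -> is_idl (colon I a).
Proof.
move=> [I0 ID IM]; split; rewrite /colon.
- by rewrite mul0r.
- by move=> x y Ix Iy; rewrite mulrDl; apply: ID.
- by move=> r x Ix; rewrite -mulrA; apply: IM.
Qed.

Lemma sub_colon I a : is_idl I -> subsetR I (colon I a).
Proof. by move=> [_ _ IM] x Ix; rewrite /colon mulrC; apply: IM. Qed.

End Ideals.

Section Expansion.

Variables (R : comNzRingType) (delta : (R -> Prop) -> (R -> Prop)).
Hypothesis delta_exp : expansion delta.
Implicit Types (I J K : R -> Prop) (a k : R).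

Lemma delta_idl I : is_idl I -> is_idl (delta I).
Proof. by case: delta_exp => Did _ _; apply: Did. Qed.

Lemma delta_sub_closed I J :
  is_idl I -> is_idl J -> delta (delta I) = delta I ->
  subsetR J (delta I) -> subsetR (delta J) (delta I).
Proof.
case: delta_exp => _ _ Dmon Iid Jid DDI JsubDI.
by rewrite -DDI; apply: Dmon => //; apply: delta_idl.
Qed.

Lemma delta_n_ideal_colon_sub I a :
  delta_n_ideal delta I -> ~ nilrad a -> subsetR (colon I a) (delta I).
Proof. by move=> [_ Hn] Na r Ira; apply: (Hn a) Na; rewrite mulrC. Qed.

Lemma delta_n_ideal_sub_of_mul I J K k :
  delta_n_ideal delta I -> K k -> ~ nilrad k ->
  subsetR (ideal_mul J K) I -> subsetR J (delta I).
Proof.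
move=> [_ Hn] Kk Nk JKsubI x Jx; apply: (Hn k) Nk.
by apply: JKsubI; rewrite mulrC; apply: ideal_mul_mem.
Qed.

Lemma delta_sub_of_mul I J K k :
  delta_n_ideal delta I -> delta (delta I) = delta I -> is_idl J ->
  K k -> ~ nilrad k -> subsetR (ideal_mul J K) I ->
  subsetR (delta J) (delta I).
Proof.
move=> DnI DDI Jid Kk Nk JKsubI.
apply: delta_sub_closed => //; first by case: DnI => -[].
exact: delta_n_ideal_sub_of_mul DnI Kk Nk JKsubI.
Qed.

Lemma delta_colon_eq I a :
  is_idl I -> delta (delta I) = delta I ->
  delta_n_ideal delta I -> ~ nilrad a -> delta (colon I a) = delta I.
Proof.
move=> Iid DDI DnI Na; have Cid := colon_idl a Iid.
case: delta_exp => _ _ Dmon; apply: subsetR_antisym.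
- apply: delta_sub_closed => //.
  exact: delta_n_ideal_colon_sub DnI Na.
- by apply: Dmon => //; apply: sub_colon.
Qed.

Lemma delta_n_ideal_fixed I :
  delta I = I -> (delta_n_ideal delta I <-> n_ideal I).
Proof. by move=> DI; rewrite /delta_n_ideal DI; split. Qed.

Lemma delta_eq_of_ideal_mul_eq I J K :
  is_idl I -> is_idl J -> ideal_mul I K = ideal_mul J K ->
  delta_n_ideal delta I -> delta_n_ideal delta J ->
  delta (delta I) = delta I -> delta (delta J) = delta J ->
  (exists k, K k /\ ~ nilrad k) -> delta I = delta J.
Proof.
move=> Iid Jid IK_JK DnI DnJ DDI DDJ [k [Kk Nk]]; apply: subsetR_antisym.
- apply: delta_sub_of_mul DnJ DDJ Iid Kk Nk _.
  by rewrite IK_JK; apply: ideal_mul_subl.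
- apply: delta_sub_of_mul DnI DDI Jid Kk Nk _.
  by rewrite -IK_JK; apply: ideal_mul_subl.
Qed.

Lemma delta_ideal_mul_eq I K :
  is_idl I -> delta_n_ideal delta (ideal_mul I K) ->
  delta (delta (ideal_mul I K)) = delta (ideal_mul I K) ->
  (exists k, K k /\ ~ nilrad k) -> delta (ideal_mul I K) = delta I.
Proof.
move=> Iid DnIK DDIK [k [Kk Nk]]; have [[IKid _] _] := DnIK.
case: delta_exp => _ _ Dmon; apply: subsetR_antisym.
- by apply: Dmon => //; apply: ideal_mul_subl.
- by apply: delta_sub_of_mul DnIK DDIK Iid Kk Nk _.
Qed.

End Expansion.

Theorem proposition2p14 (R : comNzRingType)
  (delta : (R -> Prop) -> (R -> Prop)) (I : R -> Prop) :
  expansion delta -> proper_idl I -> delta (delta I) = delta I ->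
  [/\ (* (1) *)
      (delta_n_ideal delta I -> forall a : R, ~ nilrad a ->
         delta (colon I a) = delta I),
      (* (2) *)
      (n_ideal (delta I) <-> delta_n_ideal delta (delta I)),
      (* (3) *)
      (forall J K : R -> Prop, is_idl J -> is_idl K ->
         ideal_mul I K = ideal_mul J K ->
         delta_n_ideal delta I -> delta_n_ideal delta J ->
         delta (delta J) = delta J ->
         (exists k, K k /\ ~ nilrad k) ->
         delta I = delta J) &
      (* (4) *)
      (forall K : R -> Prop, is_idl K ->
         delta_n_ideal delta (ideal_mul I K) -> delta_n_ideal delta I ->
         delta (delta (ideal_mul I K)) = delta (ideal_mul I K) ->
         (exists k, K k /\ ~ nilrad k) ->
         delta (ideal_mul I K) = delta I)].
Proof.
move=> Dexp [Iid _] DDI; split.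
- by move=> DnI a; apply: delta_colon_eq.
- by rewrite delta_n_ideal_fixed.
- by move=> J K Jid _ IK_JK DnI DnJ DDJ; apply: delta_eq_of_ideal_mul_eq.
- by move=> K _ DnIK _ DDIK; apply: delta_ideal_mul_eq.
Qed.
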